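(* Let $(\Omega,\mathcal{F})$ be a measurable space, $\mathcal{P}$ a nonempty set of probability measures on it, $\hat{\mathbb{E}}[Z]=\sup_{P\in\mathcal{P}}E_P[Z]$, and let $X,Y$ be random variables with $\hat{\mathbb{E}}[X^2]+\hat{\mathbb{E}}[Y^2]<\infty$. Suppose $\overline{\mu}_X=\underline{\mu}_X=:\mu_X$, and let $\rho_Y=\frac12(\overline{\mu}_Y+\underline{\mu}_Y)$. Then $$\overline{C}(X,Y)=\hat{\mathbb{E}}[(X-\mu_X)(Y-\rho_Y)],\qquad \underline{C}(X,Y)=-\hat{\mathbb{E}}[-(X-\mu_X)(Y-\rho_Y)].$$
   Context: For a random variable $W$ with $\hat{\mathbb{E}}[W^2]<\infty$: $\overline{\mu}_W=\hat{\mathbb{E}}[W]$, $\underline{\mu}_W=-\hat{\mathbb{E}}[-W]$, $M_W=[\underline{\mu}_W,\overline{\mu}_W]$. Upper covariance $\overline{C}(X,Y)=\max_{\mu_2\in M_Y}\min_{\mu_1\in M_X}\hat{\mathbb{E}}[(X-\mu_1)(Y-\mu_2)]$; lower covariance $\underline{C}(X,Y)=\min_{\mu_2\in M_Y}\max_{\mu_1\in M_X}\left(-\hat{\mathbb{E}}[-(X-\mu_1)(Y-\mu_2)]\right)$. *)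

From HB Require Import structures.
From mathcomp Require Import all_boot all_order all_algebra.
From mathcomp Require Import all_classical all_reals all_analysis.
Set Implicit Arguments. Unset Strict Implicit. Unset Printing Implicit Defensive.
Import Order.TTheory GRing.Theory Num.Theory.
Local Open Scope classical_set_scope.
Local Open Scope ring_scope.
Local Open Scope ereal_scope.

Section Sublinear.
Context (d : measure_display) (T : measurableType d) (R : realType).
Variable PP : set (probability T R).

Definition Ehat (Z : T -> R) : \bar R := ereal_sup [set 'E_P[Z] | P in PP].

Definition mu_up (W : T -> R) : \bar R := Ehat W.
Definition mu_lo (W : T -> R) : \bar R := - Ehat (fun w => (- W w)%R).

Definition Mset (W : T -> R) : set R :=
  [set m : R | mu_lo W <= m%:E <= mu_up W].

(* upper covariance: max_{m2 in M_Y} min_{m1 in M_X} Ehat[(X-m1)(Y-m2)]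
   (max/min rendered as sup/inf) *)
Definition upper_cov (X Y : T -> R) : \bar R :=
  ereal_sup [set ereal_inf [set Ehat (fun w => ((X w - m1) * (Y w - m2))%R)
                           | m1 in Mset X] | m2 in Mset Y].

Definition lower_cov (X Y : T -> R) : \bar R :=
  ereal_inf [set ereal_sup [set - Ehat (fun w => (- ((X w - m1) * (Y w - m2)))%R)
                           | m1 in Mset X] | m2 in Mset Y].
End Sublinear.

(** Since the upper and lower means of X coincide, E_P[X] = mu_X for every
    P in PP.  Then E_P[(X - mu_X)(Y - c)] = Cov_P(X, Y) for every constant c,
    because E_P[X - mu_X] = 0 kills the shift c.  Hence
    Ehat[(X - mu_X)(Y - c)] does not depend on c; as M_X = {mu_X} and M_Y is
    nonempty, the max-min defining the upper covariance collapses to this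
    common value, which in particular is its value at c = rho_Y. *)

From HB Require Import structures.
From mathcomp Require Import all_boot all_order all_algebra.
From mathcomp Require Import all_classical all_reals all_analysis.
From mathcomp Require Import ring.
Set Implicit Arguments. Unset Strict Implicit. Unset Printing Implicit Defensive.
Import Order.TTheory GRing.Theory Num.Theory.
Local Open Scope classical_set_scope.
Local Open Scope ring_scope.
Local Open Scope ereal_scope.

Section expectation_extra.
Context d (T : measurableType d) (R : realType) (P : probability T R).

Lemma expectationN (X : T -> R) : X \in Lfun P 1 ->
  'E_P[fun w => (- X w)%R] = - 'E_P[X].
Proof.
move=> lX; rewrite -mulN1e -expectationZl//.
by congr expectation; apply/funext => w /=; ring.
Qed.

Lemma Lfun2_expectation_sqr (X : T -> R) : measurable_fun setT X ->
  'E_P[fun w => (X w ^+ 2)%R] < +oo -> X \in Lfun P 2%:E.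
Proof.
move=> mX EX2; rewrite inE; apply/andP; split; rewrite inE//=.
rewrite /finite_norm unlock /Lnorm poweR_lty//.
apply: le_lt_trans EX2.
rewrite unlock (eq_integral (fun w => (X w ^+ 2)%:E))// => w _ /=.
by rewrite powR_mulrn// real_normK ?num_real.
Qed.

Lemma expectation_centered_mul (X Y : T -> R) (m c : R) :
  X \in Lfun P 2%:E -> Y \in Lfun P 2%:E -> 'E_P[X] = m%:E ->
  'E_P[fun w => ((X w - m) * (Y w - c))%R] = covariance P X Y.
Proof.
move=> lX lY EX.
have P1 := fin_num_measure P _ measurableT.
have lX1 := Lfun_subset12 P1 lX.
have lXm : (X \- cst m)%R \in Lfun P 2%:E.
  by rewrite rpredB ?lee1n//= => _; rewrite Lfun_cst.
have lXmY : ((X \- cst m) \* Y)%R \in Lfun P 1 by exact: Lfun2_mul_Lfun1.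
have lXm1 : (X \- cst m)%R \in Lfun P 1 by exact: Lfun_subset12.
have EXm : 'E_P[X \- cst m] = 0.
  by rewrite expectationB ?Lfun_cst// expectation_cst EX subee.
have shift (e : R) :
    'E_P[fun w => ((X w - m) * (Y w - e))%R] = 'E_P[((X \- cst m) \* Y)%R].
  have -> : (fun w => ((X w - m) * (Y w - e))%R) =
            ((X \- cst m) \* Y \- e \o* (X \- cst m))%R.
    by apply/funext => w /=; ring.
  by rewrite expectationB ?Lfun_scale// expectationZl// EXm mule0 sube0.
by rewrite shift covariance.unlock EX -(shift (fine 'E_P[Y])).
Qed.

Lemma expectation_opp_centered_mul (X Y : T -> R) (m c : R) :
  X \in Lfun P 2%:E -> Y \in Lfun P 2%:E -> 'E_P[X] = m%:E ->
  'E_P[fun w => (- ((X w - m) * (Y w - c)))%R] = - covariance P X Y.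
Proof.
move=> lX lY EX.
have P1 := fin_num_measure P _ measurableT.
have -> : (fun w => (- ((X w - m) * (Y w - c)))%R) =
          (fun w => ((X w - m) * ((\- Y) w - - c))%R).
  by apply/funext => w /=; ring.
rewrite expectation_centered_mul ?rpredN// covarianceNr//;
  by [exact: Lfun_subset12 | exact: Lfun2_mul_Lfun1].
Qed.

End expectation_extra.

Section sublinear_expectation.
Context d (T : measurableType d) (R : realType) (PP : set (probability T R)).

Lemma expectation_le_Ehat (Z : T -> R) (P : probability T R) : PP P ->
  'E_P[Z] <= Ehat PP Z.
Proof. by move=> PPP; apply: ereal_sup_ubound; exists P. Qed.

Lemma Ehat_ge0 (Z : T -> R) : PP !=set0 -> (forall w, 0 <= Z w)%R ->
  0 <= Ehat PP Z.
Proof.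
move=> [P PPP] Z0.
by rewrite (le_trans _ (expectation_le_Ehat Z PPP))// expectation_ge0.
Qed.

Lemma Lfun2_Ehat_sqr (X : T -> R) (P : probability T R) : PP P ->
  measurable_fun setT X -> Ehat PP (fun w => (X w ^+ 2)%R) < +oo ->
  X \in Lfun P 2%:E.
Proof.
move=> PPP mX EX2; apply: Lfun2_expectation_sqr => //.
exact: le_lt_trans (expectation_le_Ehat _ PPP) EX2.
Qed.

Lemma mu_lo_le_expectation (X : T -> R) (P : probability T R) : PP P ->
  X \in Lfun P 1 -> mu_lo PP X <= 'E_P[X].
Proof. by move=> PPP lX; rewrite /mu_lo leeNl -expectationN// expectation_le_Ehat. Qed.

Lemma expectation_mu_eq (X : T -> R) (m : R) (P : probability T R) : PP P ->
  X \in Lfun P 1 -> mu_up PP X = m%:E -> mu_lo PP X = m%:E ->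
  'E_P[X] = m%:E.
Proof.
move=> PPP lX up lo; apply/le_anti/andP; split.
  by rewrite -up; exact: expectation_le_Ehat.
by rewrite -lo; exact: mu_lo_le_expectation.
Qed.

Lemma Mset_mu_eq (X : T -> R) (m : R) :
  mu_up PP X = m%:E -> mu_lo PP X = m%:E -> Mset PP X = [set m].
Proof.
move=> up lo; apply/seteqP; split => x; rewrite /Mset /= up lo.
  by move=> /andP[mx xm]; apply/le_anti; rewrite -!lee_fin mx xm.
by move=> ->; rewrite lexx.
Qed.

Lemma expectation_in_Mset (X : T -> R) (P : probability T R) : PP P ->
  X \in Lfun P 1 -> Mset PP X (fine 'E_P[X]).
Proof.
move=> PPP lX; rewrite /Mset /= fineK ?expectation_fin_num//.
by rewrite expectation_le_Ehat// andbT mu_lo_le_expectation.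
Qed.

Section centered.
Variables (X Y : T -> R) (m : R).
Hypothesis centered : forall P, PP P ->
  [/\ X \in Lfun P 2%:E, Y \in Lfun P 2%:E & 'E_P[X] = m%:E].

Lemma Ehat_centered_mul (c : R) :
  Ehat PP (fun w => ((X w - m) * (Y w - c))%R) =
  ereal_sup [set covariance P X Y | P in PP].
Proof.
congr ereal_sup; apply: eq_imagel => P /centered[lX lY EX].
exact: expectation_centered_mul.
Qed.

Lemma Ehat_opp_centered_mul (c : R) :
  Ehat PP (fun w => (- ((X w - m) * (Y w - c)))%R) =
  ereal_sup [set - covariance P X Y | P in PP].
Proof.
congr ereal_sup; apply: eq_imagel => P /centered[lX lY EX].
exact: expectation_opp_centered_mul.
Qed.

End centered.

Section degenerate_mean.
Variables (X Y : T -> R) (m : R).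
Hypotheses (MX : Mset PP X = [set m]) (MY : Mset PP Y !=set0).

Lemma upper_cov_Mset1 (K : \bar R) :
  (forall c, Ehat PP (fun w => ((X w - m) * (Y w - c))%R) = K) ->
  upper_cov PP X Y = K.
Proof.
move=> EK; rewrite /upper_cov MX.
under eq_imagel => c _ do rewrite image_set1 ereal_inf1 EK.
by rewrite set_cst ifN ?ereal_sup1//; apply/set0P.
Qed.

Lemma lower_cov_Mset1 (K : \bar R) :
  (forall c, Ehat PP (fun w => (- ((X w - m) * (Y w - c)))%R) = K) ->
  lower_cov PP X Y = - K.
Proof.
move=> EK; rewrite /lower_cov MX.
under eq_imagel => c _ do rewrite image_set1 ereal_sup1 EK.
by rewrite set_cst ifN ?ereal_inf1//; apply/set0P.
Qed.

End degenerate_mean.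

End sublinear_expectation.

Theorem corollary3p17 (d : measure_display) (T : measurableType d) (R : realType)
  (PP : set (probability T R)) (hPP : PP !=set0)
  (X Y : T -> R) (mX : measurable_fun setT X) (mY : measurable_fun setT Y)
  (h2 : Ehat PP (fun w => (X w ^+ 2)%R) + Ehat PP (fun w => (Y w ^+ 2)%R) < +oo)
  (muX : R) (hup : mu_up PP X = muX%:E) (hlo : mu_lo PP X = muX%:E) :
  let rhoY : R := ((fine (mu_up PP Y) + fine (mu_lo PP Y)) / 2)%R in
  upper_cov PP X Y = Ehat PP (fun w => ((X w - muX) * (Y w - rhoY))%R) /\
  lower_cov PP X Y = - Ehat PP (fun w => (- ((X w - muX) * (Y w - rhoY)))%R).
Proof.
move=> rhoY; have [P0 PP0] := hPP.
have Ehat_sqr_ge0 (Z : T -> R) : 0 <= Ehat PP (fun w => (Z w ^+ 2)%R).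
  by apply: Ehat_ge0 => // w; exact: sqr_ge0.
have X2 : Ehat PP (fun w => (X w ^+ 2)%R) < +oo.
  exact: le_lt_trans (leeDl _ (Ehat_sqr_ge0 Y)) h2.
have Y2 : Ehat PP (fun w => (Y w ^+ 2)%R) < +oo.
  exact: le_lt_trans (leeDr _ (Ehat_sqr_ge0 X)) h2.
have L2 P : PP P -> X \in Lfun P 2%:E /\ Y \in Lfun P 2%:E.
  move=> PPP; split; first exact: Lfun2_Ehat_sqr PPP mX X2.
  exact: Lfun2_Ehat_sqr PPP mY Y2.
have L21 (P : probability T R) : {subset Lfun P 2%:E <= Lfun P 1}.
  by apply: Lfun_subset12; exact: fin_num_measure.
have centered P : PP P ->
    [/\ X \in Lfun P 2%:E, Y \in Lfun P 2%:E & 'E_P[X] = muX%:E].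
  move=> PPP; have [lX lY] := L2 P PPP.
  by split=> //; exact: expectation_mu_eq PPP (L21 P _ lX) hup hlo.
have MX := Mset_mu_eq hup hlo.
have MY : Mset PP Y !=set0.
  by eexists; exact: expectation_in_Mset PP0 (L21 _ _ (L2 _ PP0).2).
by rewrite (upper_cov_Mset1 MX MY (Ehat_centered_mul centered))
  (lower_cov_Mset1 MX MY (Ehat_opp_centered_mul centered))
  Ehat_centered_mul ?Ehat_opp_centered_mul.
Qed.
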